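(* Let $X\subseteq \mathbb{P}^1\times\mathbb{P}^1\times\mathbb{P}^1$ be a variety of lines. Then the ideal $I_X$ is a complete intersection if and only if $I_X=(F_1,F_2)$ with $\deg F_1=a\mathbf e_i$ and $\deg F_2=b\mathbf e_j+c\mathbf e_k$ with $j,k\neq i$, for some $a,b,c\in\mathbb N$.
   Context: $R=K[x_{1,0},x_{1,1},x_{2,0},x_{2,1},x_{3,0},x_{3,1}]$ ($K$ algebraically closed, characteristic zero) trigraded by $\deg x_{i,j}=\mathbf e_i$ ($\mathbf e_1,\mathbf e_2,\mathbf e_3$ the standard basis of $\mathbb N^3$), coordinate ring of $\mathbb{P}^1\times\mathbb{P}^1\times\mathbb{P}^1$. A line is the zero locus $\mathcal L(F,G)$ of $(F,G)$ with $F,G$ linear forms of two different degrees among $\mathbf e_1,\mathbf e_2,\mathbf e_3$. A variety of lines is a finite union of distinct lines, with defining ideal $I_X$ the intersection of the ideals of its lines. An ideal is a complete intersection if it is generated by a regular sequence; $F_1,F_2$ are trihomogeneous. *)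

From HB Require Import structures.
From mathcomp Require Import all_boot all_order all_algebra.
From mathcomp Require Import mpoly.
Set Implicit Arguments. Unset Strict Implicit. Unset Printing Implicit Defensive.
Import GRing.Theory.
Local Open Scope ring_scope.

(* Coordinate ring of P^1 x P^1 x P^1: R = K[x_{1,0},x_{1,1},x_{2,0},x_{2,1},x_{3,0},x_{3,1}],
   encoded as {mpoly K[6]}; the variable x_{i+1,j} (i : 'I_3, j : 'I_2) is 'X_(vidx i j),
   where vidx i j has value 2*i + j. *)
Definition vidx (i : 'I_3) (j : 'I_2) : 'I_6 := inord (2 * i + j).

Definition o3 (k : nat) : 'I_3 := inord k.
Definition o2 (k : nat) : 'I_2 := inord k.
Definition tdeg (m : 'X_{1..6}) : nat * nat * nat :=
  (m (vidx (o3 0) (o2 0)) + m (vidx (o3 0) (o2 1)),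
   m (vidx (o3 1) (o2 0)) + m (vidx (o3 1) (o2 1)),
   m (vidx (o3 2) (o2 0)) + m (vidx (o3 2) (o2 1)))%N.

Definition evec (i : 'I_3) : nat * nat * nat :=
  ((i == 0 :> nat) : nat, (i == 1 :> nat) : nat, (i == 2 :> nat) : nat).
Definition tscale (a : nat) (d : nat * nat * nat) : nat * nat * nat :=
  (a * d.1.1, a * d.1.2, a * d.2)%N.
Definition tadd (d d' : nat * nat * nat) : nat * nat * nat :=
  (d.1.1 + d'.1.1, d.1.2 + d'.1.2, d.2 + d'.2)%N.

Section Defs.
Variable K : fieldType.
Notation R := {mpoly K[6]}.

Definition trihomog_of (d : nat * nat * nat) (p : R) : Prop :=
  forall m : 'X_{1..6}, p@_m != 0 -> tdeg m = d.
Definition trihomog (p : R) : Prop := exists d, trihomog_of d p.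

Definition linear_form (i : 'I_3) (F : R) : Prop := F != 0 /\ trihomog_of (evec i) F.

Definition ideal_gen (gs : seq R) (f : R) : Prop :=
  exists cs : seq R, size cs = size gs /\ f = \sum_(l < size gs) cs`_l * gs`_l.

(* Points of P^1 x P^1 x P^1, given by representatives in K^6 with each pair nonzero. *)
Definition is_point (v : 'I_6 -> K) : Prop :=
  forall i : 'I_3, v (vidx i (o2 0)) != 0 \/ v (vidx i (o2 1)) != 0.

(* A line: data (F, G) of linear forms of two different degrees e_i, e_j (i <> j). *)
Record line := Line {
  l_i : 'I_3; l_j : 'I_3; l_F : R; l_G : R
}.
Definition dline : line := Line (o3 0) (o3 0) 0 0.
Definition is_line (L : line) : Prop :=
  l_i L != l_j L /\ linear_form (l_i L) (l_F L) /\ linear_form (l_j L) (l_G L).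

Definition locus (L : line) (v : 'I_6 -> K) : Prop :=
  is_point v /\ (l_F L).@[v] = 0 /\ (l_G L).@[v] = 0.

Definition line_ideal (L : line) : R -> Prop := ideal_gen [:: l_F L; l_G L].

Definition variety_of_lines (X : seq line) : Prop :=
  X <> [::] /\ (forall l : 'I_(size X), is_line (nth dline X l)) /\
  (forall a b : 'I_(size X), a != b ->
     exists v, ~ (locus (nth dline X a) v <-> locus (nth dline X b) v)).

Definition ideal_X (X : seq line) (f : R) : Prop :=
  forall l : 'I_(size X), line_ideal (nth dline X l) f.

Definition regular_seq (gs : seq R) : Prop :=
  ~ ideal_gen gs 1 /\
  forall l : 'I_(size gs), forall h : R,
    ideal_gen (take l gs) (gs`_l * h) -> ideal_gen (take l gs) h.

Definition complete_intersection (I : R -> Prop) : Prop :=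
  exists gs : seq R, (forall g, g \in gs -> trihomog g) /\ regular_seq gs /\
    (forall f, I f <-> ideal_gen gs f).

End Defs.

(* Let I_X be generated by a trihomogeneous regular sequence g_1, ..., g_n.
   Fix a line L(F, G) of X and the substitution psi killing F and G: its kernel is
   (F, G), modulo which F, G is regular.  Each g_l is A_l F + B_l G, and when n >= 3
   the Koszul relations put every minor A_a B_b - A_b B_a into I_X.  The other lines
   give a product M with psi M <> 0 and M F, M G in I_X; expanding M F and M G in the
   g_l turns (psi M)^2 into psi of a combination of minors, which is 0.  So n <= 2.
   For each factor i, choosing on every line a form of degree other than e_i gives an
   element of I_X surviving x_{i,0} = x_{i,1} = 0, so some g_l has i-th degree 0;
   as no g_l is constant, n = 2 and the supports of the two tridegrees are disjoint
   nonempty subsets of {1, 2, 3}, one of them a singleton.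
   Conversely, F_1 is a binary form in x_{i,0}, x_{i,1}, hence a product of linear
   forms over the algebraically closed K, and each of them is a nonzerodivisor modulo
   F_2, which does not involve x_{i,0}, x_{i,1}. *)

From HB Require Import structures.
From mathcomp Require Import all_boot all_order all_algebra.
From mathcomp Require Import mpoly.
From mathcomp Require Import ring zify.
Import GRing.Theory.
Local Open Scope ring_scope.
Set Implicit Arguments. Unset Strict Implicit. Unset Printing Implicit Defensive.

(** * Tridegrees and coordinates *)

Definition tcomp (d : nat * nat * nat) (i : 'I_3) : nat :=
  match val i with 0 => d.1.1 | 1 => d.1.2 | _ => d.2 end.

Definition vdir (u : 'I_6) : 'I_3 := inord (u %/ 2).

Notation vx i := (vidx i (o2 0)).
Notation vy i := (vidx i (o2 1)).

Lemma vidxE i j : vidx i j = (2 * i + j)%N :> nat.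
Proof. by rewrite /vidx inordK //; case: i j => [[|[|[|?]]] ?] [[|[|?]] ?]. Qed.

Lemma vdir_vidx i j : vdir (vidx i j) = i.
Proof.
by apply: ord_inj; rewrite /vdir vidxE mulnC divnMDl // divn_small ?addn0 ?inordK.
Qed.

Lemma vdirP u : u = vx (vdir u) \/ u = vy (vdir u).
Proof.
case: u => [[|[|[|[|[|[|k]]]]]] Hu] //;
  [left|right|left|right|left|right]; apply: ord_inj; by rewrite vidxE /vdir /o2 !inordK.
Qed.

Lemma vdir_neq u v : vdir u != vdir v -> u != v.
Proof. by apply: contraNneq => ->. Qed.

Lemma vx_neq_vy i : vx i != vy i.
Proof.
by apply/eqP => /(congr1 (@nat_of_ord 6)); rewrite !vidxE /o2 !inordK // => /addnI.
Qed.

Lemma vdir_vxvy u i : vdir u = i -> u = vx i \/ u = vy i.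
Proof. by move=> <-; exact: vdirP. Qed.

Lemma tdeg_tcomp m i : tcomp (tdeg m) i = (m (vx i) + m (vy i))%N.
Proof.
by case: i => [[|[|[|k]]] Hi] //; rewrite /tcomp /tdeg /o3 /=;
  congr (m (vidx _ _) + m (vidx _ _))%N; apply: ord_inj; rewrite inordK.
Qed.

Lemma mnm_le_tcomp (m : 'X_{1..6}) u : (m u <= tcomp (tdeg m) (vdir u))%N.
Proof. by rewrite tdeg_tcomp; case: (vdirP u) => {1}->; rewrite ?leq_addr ?leq_addl. Qed.

Lemma tcomp_evec i i' : tcomp (evec i) i' = (i == i') :> nat.
Proof. by case: i' => [[|[|[|k]]] Hi] //; case: i => [[|[|[|]]] ?]. Qed.

Lemma tcomp_tscale a d i : tcomp (tscale a d) i = (a * tcomp d i)%N.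
Proof. by case: i => [[|[|[|]]] ?]. Qed.

Lemma tcomp_tadd d d' i : tcomp (tadd d d') i = (tcomp d i + tcomp d' i)%N.
Proof. by case: i => [[|[|[|]]] ?]. Qed.

Lemma tcomp_inj d d' : (forall i, tcomp d i = tcomp d' i) -> d = d'.
Proof.
case: d => [[x y] z]; case: d' => [[x' y'] z'] H.
have := H (Ordinal (isT : (0 < 3)%N)); have := H (Ordinal (isT : (1 < 3)%N)).
by have := H (Ordinal (isT : (2 < 3)%N)); rewrite /tcomp /= => -> -> ->.
Qed.
Lemma ord3_others (i : 'I_3) :
  exists j k, [/\ j != i, k != i, j != k & forall i', [|| i' == i, i' == j | i' == k]].
Proof.
pose o n (h : (n < 3)%N) := Ordinal h.
by case: i => [[|[|[|//]]] Hi];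
  [exists (o 1 isT), (o 2 isT) | exists (o 0 isT), (o 2 isT) | exists (o 0 isT), (o 1 isT)];
  split=> //= -[[|[|[|//]]] ?].
Qed.

Lemma tdeg_single d i : (forall i', i' != i -> tcomp d i' = 0%N) ->
  d = tscale (tcomp d i) (evec i).
Proof.
move=> d0; apply: tcomp_inj => i'; rewrite tcomp_tscale tcomp_evec.
by have [->|i'i] := eqVneq i' i; rewrite ?muln1 // muln0 d0.
Qed.

Lemma tdeg_pair d i j k : j != i -> k != i -> j != k ->
  (forall i', [|| i' == i, i' == j | i' == k]) -> tcomp d i = 0%N ->
  d = tadd (tscale (tcomp d j) (evec j)) (tscale (tcomp d k) (evec k)).
Proof.
move=> ji ki jk cover di; have kj : k != j by rewrite eq_sym.
apply: tcomp_inj => i'; rewrite tcomp_tadd !tcomp_tscale !tcomp_evec.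
by case/or3P: (cover i') => /eqP->;
  rewrite ?eqxx ?(negbTE ji) ?(negbTE ki) ?(negbTE jk) ?(negbTE kj) ?muln0 ?muln1 ?addn0.
Qed.

Lemma tdeg_complementary d0 d1 : (forall i, tcomp d0 i = 0%N \/ tcomp d1 i = 0%N) ->
  (exists i, 0 < tcomp d0 i)%N -> (exists i, 0 < tcomp d1 i)%N ->
  exists i, ((forall i', i' != i -> tcomp d0 i' = 0%N) /\ tcomp d1 i = 0%N) \/
            ((forall i', i' != i -> tcomp d1 i' = 0%N) /\ tcomp d0 i = 0%N).
Proof.
move=> d01 [i0 d0i0] [i1 d1i1]; pose S d := [set i | 0 < tcomp d i]%N.
have single d d' i : S d = [set i] -> (forall i, tcomp d i = 0%N \/ tcomp d' i = 0%N) ->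
    (forall i', i' != i -> tcomp d i' = 0%N) /\ tcomp d' i = 0%N.
  move=> Si dd'; split=> [i' i'i|].
    have : i' \notin S d by rewrite Si inE.
    by rewrite inE -leqNgt leqn0 => /eqP.
  have : i \in S d by rewrite Si set11.
  by rewrite inE; case: (dd' i) => [->|].
have disj : S d0 :&: S d1 = set0.
  by apply/setP => i; rewrite !inE; case: (d01 i) => ->; rewrite ?andbF.
have := max_card (S d0 :|: S d1); rewrite cardsU disj cards0 subn0 card_ord => card3.
have p0 : (0 < #|S d0|)%N by apply/card_gt0P; exists i0; rewrite inE.
have p1 : (0 < #|S d1|)%N by apply/card_gt0P; exists i1; rewrite inE.
have [/cards1P[i Si]|/cards1P[i Si]] : #|S d0| == 1%N \/ #|S d1| == 1%N by lia.
  by exists i; left; apply: single.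
by exists i; right; apply: single => // i'; rewrite or_comm.
Qed.

(** * Ideals and regular sequences *)

Section Ideals.
Variable K : fieldType.
Local Notation R := {mpoly K[6]}.
Implicit Types (gs : seq R) (f g h : R).

Lemma ideal_genP gs f :
  ideal_gen gs f <-> exists c : nat -> R, f = \sum_(l < size gs) c l * gs`_l.
Proof.
split => [[cs [_ ->]]|[c ->]]; first by exists (fun l => cs`_l).
exists (mkseq c (size gs)); split; first by rewrite size_mkseq.
by apply: eq_bigr => l _; rewrite nth_mkseq.
Qed.

Lemma ideal_gen0 gs : ideal_gen gs 0.
Proof. by apply/ideal_genP; exists (fun _ => 0); rewrite big1 // => l _; rewrite mul0r. Qed.

Lemma ideal_genD gs f g : ideal_gen gs f -> ideal_gen gs g -> ideal_gen gs (f + g).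
Proof.
move=> /ideal_genP[c ->] /ideal_genP[d ->]; apply/ideal_genP; exists (fun l => c l + d l).
by rewrite -big_split; apply: eq_bigr => l _; rewrite mulrDl.
Qed.

Lemma ideal_genMl gs h f : ideal_gen gs f -> ideal_gen gs (h * f).
Proof.
move=> /ideal_genP[c ->]; apply/ideal_genP; exists (fun l => h * c l).
by rewrite mulr_sumr; apply: eq_bigr => l _; rewrite mulrA.
Qed.

Lemma ideal_genB gs f g : ideal_gen gs f -> ideal_gen gs g -> ideal_gen gs (f - g).
Proof. by move=> If Ig; rewrite -mulN1r; apply/ideal_genD/ideal_genMl. Qed.

Lemma ideal_gen_sum gs (I : Type) (r : seq I) (F : I -> R) :
  (forall x, ideal_gen gs (F x)) -> ideal_gen gs (\sum_(x <- r) F x).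
Proof.
move=> IF; elim: r => [|x r IHr]; first by rewrite big_nil; exact: ideal_gen0.
by rewrite big_cons; apply: ideal_genD.
Qed.

Lemma ideal_gen_nth gs l : (l < size gs)%N -> ideal_gen gs gs`_l.
Proof.
move=> lt; apply/ideal_genP; exists (fun k => (k == l)%:R).
rewrite (bigD1 (Ordinal lt)) //= eqxx mul1r big1 ?addr0 // => k kl.
by rewrite (_ : (k == l :> nat) = false) ?mul0r //; apply: negbTE.
Qed.

Lemma ideal_gen_trans gs gs' f : (forall l, (l < size gs)%N -> ideal_gen gs' gs`_l) ->
  ideal_gen gs f -> ideal_gen gs' f.
Proof.
by move=> Igs /ideal_genP[c ->]; apply: ideal_gen_sum => l; apply/ideal_genMl/Igs.
Qed.

Lemma ideal_gen_take_le k k' gs f : (k <= k')%N ->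
  ideal_gen (take k gs) f -> ideal_gen (take k' gs) f.
Proof.
move=> kk'; apply: ideal_gen_trans => l; rewrite size_take leq_min => /andP[lk ls].
by rewrite nth_take // -(nth_take _ (leq_trans lk kk')); apply: ideal_gen_nth;
  rewrite size_take leq_min (leq_trans lk kk') ls.
Qed.

Lemma ideal_gen_take k gs f : ideal_gen (take k gs) f -> ideal_gen gs f.
Proof.
have [ks|/ltnW sk] := leqP k (size gs).
  by rewrite -{2}(take_size gs); apply: ideal_gen_take_le.
by rewrite take_oversize.
Qed.

Lemma ideal_gen_takeP k gs f : (k <= size gs)%N ->
  ideal_gen (take k gs) f <-> exists c : nat -> R, f = \sum_(l < k) c l * gs`_l.
Proof.
move=> ks; rewrite ideal_genP size_takel //.
by split=> -[c ->]; exists c; apply: eq_bigr => l _; rewrite nth_take.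
Qed.

Lemma ideal_gen_nilP f : ideal_gen [::] f <-> f = 0.
Proof.
by rewrite ideal_genP; split=> [[c ->]|->]; [rewrite big_ord0 | exists (fun=> 0); rewrite big_ord0].
Qed.

Lemma ideal_gen1P F f : ideal_gen [:: F] f <-> exists a, f = a * F.
Proof.
rewrite ideal_genP; split => [[c ->]|[a ->]]; first by exists (c 0%N); rewrite big_ord1.
by exists (fun=> a); rewrite big_ord1.
Qed.

Lemma ideal_gen2P F G f : ideal_gen [:: F; G] f <-> exists a b, f = a * F + b * G.
Proof.
rewrite ideal_genP; split => [[c ->]|[a [b ->]]].
  by exists (c 0%N), (c 1%N); rewrite !big_ord_recl big_ord0 addr0.
by exists (fun l => if l == 0%N then a else b); rewrite !big_ord_recl big_ord0 addr0.
Qed.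

Lemma ideal_gen2C F G f : ideal_gen [:: F; G] f <-> ideal_gen [:: G; F] f.
Proof. by rewrite !ideal_gen2P; split=> -[a [b ->]]; exists b, a; rewrite addrC. Qed.

Lemma regular_seq_nth_neq0 gs l : regular_seq gs -> (l < size gs)%N -> gs`_l != 0.
Proof.
move=> [gs_proper gs_reg] ls; apply/eqP => gs_l0; apply: gs_proper.
apply: (@ideal_gen_take l); apply: (gs_reg (Ordinal ls)).
by rewrite /= gs_l0 mul0r; exact: ideal_gen0.
Qed.

(* Syzygies of a regular sequence are Koszul. *)
Lemma regular_seq_syzygy gs : regular_seq gs -> forall k, (k <= size gs)%N ->
  forall w : nat -> R, \sum_(l < k) w l * gs`_l = 0 ->
  forall l, (l < k)%N -> ideal_gen (take k gs) (w l).
Proof.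
move=> [_ gs_reg]; elim=> [|k IHk] // /[dup] ks /ltnW ks' w; rewrite big_ord_recr /= => sum0.
have Iwk : ideal_gen (take k gs) (w k).
  apply: (gs_reg (Ordinal ks)); apply/(ideal_gen_takeP _ ks'); exists (fun l => - w l).
  under eq_bigr => l _ do rewrite mulNr.
  by apply/eqP; rewrite sumrN mulrC -addr_eq0 addrC sum0.
have [u wkE] := (ideal_gen_takeP _ ks').1 Iwk.
move=> l; rewrite ltnS leq_eqVlt => /orP[/eqP ->|lk].
  exact: ideal_gen_take_le Iwk.
have Iwu : ideal_gen (take k gs) (w l + u l * gs`_k).
  apply: (IHk ks' (fun l => w l + u l * gs`_k)) lk.
  rewrite -[RHS]sum0 wkE mulr_suml -big_split /=.
  by apply: eq_bigr => l' _; ring.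
have Igk : ideal_gen (take k.+1 gs) gs`_k.
  by rewrite -(nth_take _ (ltnSn k)); apply: ideal_gen_nth; rewrite size_takel.
by rewrite -(addrK (u l * gs`_k) (w l)); apply/ideal_genB/ideal_genMl/Igk;
  apply: ideal_gen_take_le Iwu.
Qed.

Lemma ideal_gen2_coefs (F G : R) (g : nat -> R) n :
  (forall l, (l < n)%N -> ideal_gen [:: F; G] (g l)) ->
  exists A B : nat -> R, forall l, (l < n)%N -> g l = A l * F + B l * G.
Proof.
move=> gFG; have AB l : exists ab : R * R, (l < n)%N ==> (g l == ab.1 * F + ab.2 * G).
  have [/gFG/ideal_gen2P[a [b gE]]|_] := ltnP l n; last by exists (0, 0).
  by exists (a, b); rewrite gE eqxx.
exists (fun l => (xchoose (AB l)).1), (fun l => (xchoose (AB l)).2) => l ln.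
by have /implyP/(_ ln)/eqP := xchooseP (AB l).
Qed.

Lemma rmorph_ideal_gen_eq0 (S : pzRingType) (psi : {rmorphism R -> S}) gs f :
  (forall l, (l < size gs)%N -> psi gs`_l = 0) -> ideal_gen gs f -> psi f = 0.
Proof.
move=> psi_gs /ideal_genP[c ->]; rewrite rmorph_sum big1 // => l _.
by rewrite rmorphM psi_gs ?mulr0.
Qed.

Lemma regular_seq_minor gs (A B : nat -> R) (F G : R) a b :
  regular_seq gs -> (2 < size gs)%N ->
  (forall l, (l < size gs)%N -> gs`_l = A l * F + B l * G) ->
  (a < size gs)%N -> (b < size gs)%N -> ideal_gen gs (A a * B b - A b * B a).
Proof.
move=> rg gs3 gsE al bl.
have [->|ab] := eqVneq a b; first by rewrite subrr; exact: ideal_gen0.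
have [c cl /andP[ca cb]] : exists2 c, (c < size gs)%N & (c != a) && (c != b).
  have [ab0|ab0] := boolP ((a != 0%N) && (b != 0%N)); first by exists 0%N; move: gs3 ab0; lia.
  have [ab1|ab1] := boolP ((a != 1%N) && (b != 1%N)); first by exists 1%N; move: gs3 ab1; lia.
  by exists 2%N; move: gs3 ab ab0 ab1; lia.
pose D x y := A x * B y - A y * B x.
have delta x (Y : nat -> R) : (x < size gs)%N ->
    \sum_(0 <= l < size gs) (l == x)%:R * Y l = Y x.
  move=> xl; rewrite (bigD1_seq x) ?mem_index_iota ?iota_uniq //= eqxx mul1r.
  by rewrite big1 ?addr0 // => l /negbTE ->; rewrite mul0r.
(* The determinant with rows (A_l, B_l, gs_l), l = a, b, c, vanishes since its
   last column is F times the first plus G times the second. *)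
pose w l := (l == a)%:R * D b c + (l == b)%:R * D c a + (l == c)%:R * D a b.
have w0 : \sum_(l < size gs) w l * gs`_l = 0.
  rewrite -(big_mkord xpredT (fun l => w l * gs`_l)).
  under eq_bigr do rewrite /w !mulrDl -!mulrA.
  by rewrite !big_split /= !delta // !gsE // /D; ring.
have := regular_seq_syzygy rg (leqnn _) w0 cl; rewrite take_size /w eqxx.
by rewrite (negbTE ca) (negbTE cb) !mul0r !add0r mul1r.
Qed.

End Ideals.

Lemma regular_seq_size_le2 (K : fieldType) (S : idomainType)
    (psi : {rmorphism {mpoly K[6]} -> S}) (F G M : {mpoly K[6]}) gs :
  regular_seq gs -> (forall l, (l < size gs)%N -> ideal_gen [:: F; G] gs`_l) ->
  (forall x y, F * x = G * y -> psi x = 0 /\ psi y = 0) ->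
  psi M != 0 -> ideal_gen gs (M * F) -> ideal_gen gs (M * G) -> (size gs <= 2)%N.
Proof.
move=> rg gsFG FG_sep psiM MF MG; rewrite leqNgt; apply/negP => gs3.
have [psiG psiF] := FG_sep _ _ (mulrC F G).
have [A [B gsE]] := ideal_gen2_coefs gsFG.
have psi_gs f : ideal_gen gs f -> psi f = 0.
  apply: rmorph_ideal_gen_eq0 => l ls.
  by rewrite gsE // rmorphD !rmorphM psiF psiG !mulr0 addr0.
pose P c := \sum_(a < size gs) c a * A a.
pose Q c := \sum_(a < size gs) c a * B a.
have PQ f : ideal_gen gs f -> exists c, f = P c * F + Q c * G.
  move=> /ideal_genP[c ->]; exists c; rewrite !mulr_suml -big_split.
  by apply: eq_bigr => a _ /=; rewrite gsE //; ring.
have [[c MFE] [e MGE]] := (PQ _ MF, PQ _ MG).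
have [psiMP psiQ] : psi (M - P c) = 0 /\ psi (Q c) = 0.
  by apply: FG_sep; rewrite mulrBr mulrC MFE; ring.
have [psiP psiMQ] : psi (P e) = 0 /\ psi (M - Q e) = 0.
  by apply: FG_sep; rewrite mulrBr [G * M]mulrC MGE; ring.
have minors0 : psi (P c * Q e - P e * Q c) = 0.
  have -> : P c * Q e - P e * Q c =
      \sum_(a < size gs) \sum_(b < size gs) c a * e b * (A a * B b - A b * B a).
    rewrite !big_distrlr /= [X in _ - X]exchange_big -sumrB.
    by apply: eq_bigr => a _; rewrite -sumrB; apply: eq_bigr => b _; ring.
  rewrite rmorph_sum big1 // => a _; rewrite rmorph_sum big1 // => b _.
  rewrite rmorphM (psi_gs (A a * B b - A b * B a)) ?mulr0 //.
  exact: regular_seq_minor rg gs3 gsE (ltn_ord a) (ltn_ord b).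
have psiPc : psi (P c) = psi M by apply/esym/eqP; rewrite -subr_eq0 -rmorphB psiMP.
have psiQe : psi (Q e) = psi M by apply/esym/eqP; rewrite -subr_eq0 -rmorphB psiMQ.
move/eqP: minors0; rewrite rmorphB !rmorphM psiPc psiQe psiP psiQ mulr0 subr0.
by rewrite mulf_eq0 orbb (negbTE psiM).
Qed.

(** * Substituting for one variable *)

Definition msubst_tuple (R : comNzRingType) n (s t : 'I_n) (r : R) :=
  [tuple if u == s then r *: 'X_t else 'X_u | u < n].
Notation msubst s t r := (comp_mpoly (msubst_tuple s t r)).

Section Substitution.
Variables (R : comNzRingType) (n : nat).
Implicit Types (p q : {mpoly R[n]}) (f : 'I_n -> {mpoly R[n]}) (s t u : 'I_n) (r : R).

Lemma comp_mpoly_fix f p :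
  (forall m u, m \in msupp p -> m u != 0%N -> f u = 'X_u) ->
  comp_mpoly [tuple f u | u < n] p = p.
Proof.
move=> fX; rewrite comp_mpolyEX [RHS]mpolyE; apply: eq_big_seq => m mp.
rewrite comp_mpolyX mpolyXE_id; congr (_ *: _); apply: eq_bigr => u _.
by rewrite tnth_mktuple; have [->|/(fX m u mp) ->] := eqVneq (m u) 0%N; rewrite ?expr0.
Qed.

Lemma comp_mpoly_eq0 f p :
  (forall m, m \in msupp p -> exists2 u, m u != 0%N & f u = 0) ->
  comp_mpoly [tuple f u | u < n] p = 0.
Proof.
move=> f0; rewrite comp_mpolyEX big1_seq // => m /andP[_ /f0[u mu fu]].
by rewrite comp_mpolyX (bigD1 u) //= tnth_mktuple fu expr0n (negbTE mu) mul0r scaler0.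
Qed.

Definition lin s t r : {mpoly R[n]} := 'X_s - r *: 'X_t.

Lemma msubstX s t r u : msubst s t r 'X_u = if u == s then r *: 'X_t else 'X_u.
Proof. by rewrite comp_mpolyXU -tnth_nth tnth_mktuple. Qed.

Lemma msubst_fix s t r p : (forall m, m \in msupp p -> m s = 0%N) -> msubst s t r p = p.
Proof.
by move=> ps0; apply: comp_mpoly_fix => m u mp; case: ifP => [/eqP ->|//]; rewrite ps0.
Qed.

Lemma msubst_lin_other s t r s' t' r' : s != s' -> s != t' ->
  msubst s t r (lin s' t' r') = lin s' t' r'.
Proof.
move=> ss' st'; rewrite /lin rmorphB /= comp_mpolyZ.
by rewrite !msubstX ![_ == s]eq_sym (negbTE ss') (negbTE st').
Qed.

Lemma msubst_lin s t r : s != t -> msubst s t r (lin s t r) = 0.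
Proof.
move=> st; rewrite /lin rmorphB /= comp_mpolyZ.
by rewrite !msubstX eqxx eq_sym (negbTE st) subrr.
Qed.

(* The [p] satisfying this contain constants and variables and are closed under
   sums and products. *)
Lemma lin_dvd_sub_msubst s t r p : exists q, p - msubst s t r p = lin s t r * q.
Proof.
pose P p' := exists q, p' - msubst s t r p' = lin s t r * q.
have P0 : P 0 by exists 0; rewrite rmorph0 subrr mulr0.
have PD p1 p2 : P p1 -> P p2 -> P (p1 + p2).
  by move=> [q1 E1] [q2 E2]; exists (q1 + q2); rewrite rmorphD mulrDr -E1 -E2; ring.
have PM p1 p2 : P p1 -> P p2 -> P (p1 * p2).
  move=> [q1 E1] [q2 E2]; exists (p1 * q2 + q1 * msubst s t r p2).
  have -> : p1 * p2 - msubst s t r (p1 * p2) =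
    p1 * (p2 - msubst s t r p2) + (p1 - msubst s t r p1) * msubst s t r p2.
    by rewrite rmorphM /=; ring.
  by rewrite E1 E2; ring.
have PC c : P c%:MP by exists 0; rewrite comp_mpolyC subrr mulr0.
have PX u : P 'X_u.
  rewrite /P msubstX; case: eqP => [->|_]; first by exists 1; rewrite mulr1.
  by exists 0; rewrite subrr mulr0.
have Pprod (us : seq 'I_n) (F : 'I_n -> {mpoly R[n]}) :
    (forall u, P (F u)) -> P (\prod_(u <- us) F u).
  move=> PF; elim: us => [|u us IH]; first by rewrite big_nil -mpolyC1.
  by rewrite big_cons; apply: (PM).
rewrite [p]mpolyE; apply: (big_ind P) => // m _; rewrite -mul_mpolyC mpolyXE_id.
apply: (PM) => //; apply: Pprod => u; elim: (m u) => [|k IHk]; first by rewrite expr0 -mpolyC1.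
by rewrite exprS; apply: (PM).
Qed.

Lemma msubst_eq0 s t r p : msubst s t r p = 0 -> exists q, p = lin s t r * q.
Proof. by move=> p0; have [q] := lin_dvd_sub_msubst s t r p; rewrite p0 subr0; exists q. Qed.

Lemma lin_neq0 s t r : s != t -> lin s t r != 0.
Proof.
move=> st; apply/eqP => /(congr1 (mcoeff U_(s))).
rewrite /lin mcoeffB mcoeffZ !mcoeffXU eqxx eq_sym (negbTE st) mulr0 subr0 mcoeff0.
by move/eqP; rewrite oner_eq0.
Qed.

Lemma msubst_binom s t r a b : s != t ->
  msubst s t r (a *: 'X_s + b *: 'X_t) = (a * r + b) *: 'X_t.
Proof.
move=> st; rewrite rmorphD /= !comp_mpolyZ !msubstX eqxx eq_sym (negbTE st).
by rewrite scalerA scalerDl.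
Qed.

Lemma binom_lin s t r a b : (a * r + b) *: 'X_t = 0 ->
  a *: 'X_s + b *: 'X_t = a *: lin s t r.
Proof.
move=> /(congr1 (mcoeff U_(t))); rewrite mcoeffZ mcoeffXU eqxx mulr1 mcoeff0.
by move/eqP; rewrite addrC addr_eq0 => /eqP ->; rewrite /lin scalerBr scalerA scaleNr.
Qed.

End Substitution.

Definition regular_mod (R : comNzRingType) (G F : R) :=
  forall h a, F * h = a * G -> exists b, h = b * G.

Section LinearFactors.
Variables (R : idomainType) (n : nat).
Implicit Types (F G : {mpoly R[n]}) (s t : 'I_n) (r : R).

Lemma regular_mod_lin s t r G F : s != t -> F != 0 -> msubst s t r F = F ->
  regular_mod G F -> regular_mod (lin s t r * G) F.
Proof.
move=> st F0 FE FG h a FhE.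
have /msubst_eq0[q hE] : msubst s t r h = 0.
  have : F * msubst s t r h = 0.
    by rewrite -{1}FE -rmorphM FhE !rmorphM /= msubst_lin // mul0r mulr0.
  by move/eqP; rewrite mulf_eq0 (negbTE F0) => /eqP.
have /FG[b qE] : F * q = a * G.
  by apply: (mulfI (lin_neq0 r st)); rewrite mulrCA -hE FhE mulrCA.
by exists b; rewrite hE qE mulrCA.
Qed.

End LinearFactors.

Section BinaryForms.
Variables (R : comNzRingType) (n : nat) (s t : 'I_n).
Implicit Types p q : {poly R}.

Definition bform a p : {mpoly R[n]} :=
  \sum_(k < a.+1) p`_k *: ('X_s ^+ k * 'X_t ^+ (a - k)).

Lemma bform0 p : bform 0 p = (p`_0)%:MP.
Proof. by rewrite /bform big_ord1 /= !expr0 mulr1 -mul_mpolyC mulr1. Qed.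

Lemma bformB a p q : bform a (p - q) = bform a p - bform a q.
Proof. by rewrite /bform -sumrB; apply: eq_bigr => k _; rewrite coefB scalerBl. Qed.

Lemma bformZ a c p : bform a (c%:P * p) = c *: bform a p.
Proof. by rewrite /bform scaler_sumr; apply: eq_bigr => k _; rewrite coefCM scalerA. Qed.

Lemma bformXl a p : bform a.+1 ('X * p) = 'X_s * bform a p.
Proof.
rewrite /bform big_ord_recl /= coefXM eqxx scale0r add0r mulr_sumr.
by apply: eq_bigr => k _; rewrite coefXM /bump /= add1n subSS -scalerAr mulrA exprS.
Qed.

Lemma bformXr a p : (size p <= a.+1)%N -> bform a.+1 p = 'X_t * bform a p.
Proof.
move=> sp; rewrite /bform big_ord_recr /= (nth_default 0 sp) scale0r addr0 mulr_sumr.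
apply: eq_bigr => k _; rewrite -scalerAr subSn ?exprS; last by rewrite -ltnS.
by rewrite mulrCA.
Qed.

End BinaryForms.

Section ClosedBinaryForms.
Variables (K : closedFieldType) (n : nat) (s t : 'I_n).
Hypothesis st : s != t.

(* Over an algebraically closed field a binary form is a product of linear forms,
   each of which is regular on polynomials free of [X_s] and [X_t]. *)
Lemma regular_mod_bform a (p : {poly K}) (F : {mpoly K[n]}) :
  p != 0 -> (size p <= a.+1)%N -> F != 0 ->
  (forall m, m \in msupp F -> m s = 0%N /\ m t = 0%N) -> regular_mod (bform s t a p) F.
Proof.
move=> + + F0 Fst; elim: a p => [|a IHa] p p0 sp.
  have p00 : p`_0 != 0 by apply: contra p0 => /eqP p00; rewrite (size1_polyC sp) p00.
  move=> h b _; exists (h * (p`_0)^-1%:MP).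
  by rewrite bform0 -mulrA -mpolyCM mulVf // mulr1.
have Fs r : msubst s t r F = F by apply: msubst_fix => m /Fst[].
have Ft r : msubst t s r F = F by apply: msubst_fix => m /Fst[].
have [spa|] := leqP (size p) a.+1.
  rewrite bformXr // (_ : 'X_t = lin t s 0); last by rewrite /lin scale0r subr0.
  apply: regular_mod_lin => //; [by rewrite eq_sym | exact: IHa].
move=> spa; have sp2 : size p = a.+2 by apply/eqP; rewrite eqn_leq sp.
have [x /factor_theorem[q pE]] : exists x, root p x by apply/closed_rootP; rewrite sp2.
have q0 : q != 0 by apply: contra p0 => /eqP q0; rewrite pE q0 mul0r.
have sq : size q = a.+1.
  by move: sp2; rewrite pE size_mul ?polyXsubC_eq0 // size_XsubC addn2 => -[].
have -> : bform s t a.+1 p = lin s t x * bform s t a q.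
  by rewrite pE mulrC mulrBl bformB bformXl bformZ bformXr ?sq // /lin mulrBl -scalerAl.
by apply: regular_mod_lin => //; apply: IHa; rewrite ?sq.
Qed.

End ClosedBinaryForms.

Section TwoSubstitutions.
Variables (R : idomainType) (n : nat) (s1 t1 s2 t2 : 'I_n) (r1 r2 : R).
Hypotheses (s1t1 : s1 != t1) (s2t2 : s2 != t2).
Hypotheses (s1s2 : s1 != s2) (s1t2 : s1 != t2) (s2t1 : s2 != t1).
Local Notation lin1 := (lin s1 t1 r1).
Local Notation lin2 := (lin s2 t2 r2).
Local Notation psi p := (msubst s2 t2 r2 (msubst s1 t1 r1 p)).

Lemma msubst2_lin1 : psi lin1 = 0.
Proof. by rewrite msubst_lin // rmorph0. Qed.

Lemma msubst2_lin2 : psi lin2 = 0.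
Proof. by rewrite /= msubst_lin_other // msubst_lin. Qed.

Lemma msubst2_lin_sep x y : lin1 * x = lin2 * y -> psi x = 0 /\ psi y = 0.
Proof.
move=> xyE; have s2s1 : s2 != s1 by rewrite eq_sym.
split.
  have /eqP : msubst s2 t2 r2 (lin1 * x) = msubst s2 t2 r2 (lin2 * y) by rewrite xyE.
  rewrite !rmorphM /= msubst_lin // msubst_lin_other // mul0r mulf_eq0.
  rewrite (negbTE (lin_neq0 _ s1t1)) /= => /eqP/msubst_eq0[q ->].
  by rewrite !rmorphM /= msubst_lin_other // msubst_lin // mul0r.
have /eqP : msubst s1 t1 r1 (lin1 * x) = msubst s1 t1 r1 (lin2 * y) by rewrite xyE.
rewrite !rmorphM /= msubst_lin // msubst_lin_other // mul0r eq_sym mulf_eq0.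
by rewrite (negbTE (lin_neq0 _ s2t2)) /= => /eqP /= ->; rewrite rmorph0.
Qed.

End TwoSubstitutions.

(** * Trihomogeneous polynomials *)

Definition kill_tuple (K : fieldType) (i : 'I_3) : 6.-tuple {mpoly K[6]} :=
  [tuple if vdir u == i then 0 else 'X_u | u < 6].
Notation kill_dir i := (comp_mpoly (kill_tuple _ i)).

Section Trihomogeneous.
Variable K : fieldType.
Local Notation R := {mpoly K[6]}.
Implicit Types (p g F H : R) (d : nat * nat * nat).

Lemma trihomog_mnm d p m u : trihomog_of d p -> m \in msupp p ->
  tcomp d (vdir u) = 0%N -> m u = 0%N.
Proof.
rewrite mcoeff_msupp => pd pm du0; apply/eqP; rewrite -leqn0.
by apply: leq_trans (mnm_le_tcomp m u) _; rewrite (pd m pm) du0.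
Qed.

Lemma trihomog_const d g : trihomog_of d g -> (forall i, tcomp d i = 0%N) ->
  g = (g@_0)%:MP.
Proof.
move=> gd d0; apply/mpolyP => m; rewrite mcoeffC.
have [->|m0] := eqVneq m 0%MM; first by rewrite mulr1.
rewrite mulr0; apply/eqP; rewrite mcoeff_eq0; apply: contra m0 => gm.
by apply/eqP/mnmP => u; rewrite mnm0E (trihomog_mnm gd gm).
Qed.

Lemma kill_dir_pos d g i : trihomog_of d g -> (0 < tcomp d i)%N -> kill_dir i g = 0.
Proof.
move=> gd di; apply: comp_mpoly_eq0 => m; rewrite mcoeff_msupp => gm.
move: di; rewrite -(gd m gm) tdeg_tcomp.
have [mx0|mx] := eqVneq (m (vx i)) 0%N; last first.
  by exists (vx i); rewrite // vdir_vidx eqxx.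
by rewrite mx0 => my; exists (vy i); rewrite -?lt0n // vdir_vidx eqxx.
Qed.

Lemma kill_dir_fix d g i : trihomog_of d g -> tcomp d i = 0%N -> kill_dir i g = g.
Proof.
move=> gd di; apply: comp_mpoly_fix => m u gm.
by case: ifP => [/eqP ui|//]; rewrite (trihomog_mnm gd gm) // ui.
Qed.

Lemma trihomog_bform i a F : trihomog_of (tscale a (evec i)) F ->
  exists2 p : {poly K}, (size p <= a.+1)%N & F = bform (vx i) (vy i) a p.
Proof.
move=> Fd; exists (\poly_(k < a.+1) \sum_(m <- msupp F) F@_m * (m (vx i) == k)%:R).
  exact: size_poly.
rewrite {1}[F]mpolyE /bform.
under [RHS]eq_bigr => k _ do rewrite coef_poly ltn_ord scaler_suml.
rewrite exchange_big /=; apply: eq_big_seq => m Fm.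
have mi : (m (vx i) + m (vy i))%N = a.
  by rewrite -tdeg_tcomp (Fd m _) ?tcomp_tscale ?tcomp_evec ?eqxx ?muln1 // -mcoeff_msupp.
have mo u : vdir u != i -> m u = 0%N.
  move=> ui; apply: (trihomog_mnm Fd Fm).
  by rewrite tcomp_tscale tcomp_evec eq_sym (negbTE ui) muln0.
have lt : (m (vx i) < a.+1)%N by rewrite ltnS -mi leq_addr.
rewrite (bigD1 (Ordinal lt)) //= eqxx mulr1 big1 => [|k /negbTE ki]; last first.
  rewrite (_ : (_ == k :> nat) = false) ?mulr0 ?scale0r //.
  by apply: contraFF ki => /eqP ki; apply/eqP/ord_inj.
rewrite addr0 -mi addKn mpolyXE_id (bigD1 (vx i)) // (bigD1 (vy i)) /=; last first.
  by rewrite eq_sym vx_neq_vy.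
rewrite big1 ?mulr1 // => u /andP[ux uy]; rewrite mo ?expr0 //.
by apply: contra ux => /eqP/vdir_vxvy[->|/eqP]; rewrite // (negbTE uy).
Qed.

Lemma msubst_trihomog d p s t (r : K) : trihomog_of d p -> tcomp d (vdir s) = 0%N ->
  msubst s t r p = p.
Proof. by move=> pd ds; apply: msubst_fix => m pm; apply: trihomog_mnm pd pm ds. Qed.

Lemma linear_formP i H : linear_form i H ->
  exists a b, H = a *: 'X_(vx i) + b *: 'X_(vy i).
Proof.
move=> [_ Hi]; have [|p _ ->] := @trihomog_bform i 1 H.
  rewrite (_ : tscale 1 (evec i) = evec i) //.
  by apply: tcomp_inj => k; rewrite tcomp_tscale mul1n.
exists p`_1, p`_0; rewrite /bform !big_ord_recl big_ord0 /= addr0 addrC.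
by rewrite expr0 mul1r expr1 /bump /= subnn expr0 mulr1.
Qed.

Lemma linear_form_dir i H s t : linear_form i H -> vdir s = i -> vdir t = i -> s != t ->
  exists a b, H = a *: 'X_s + b *: 'X_t.
Proof.
move=> /linear_formP[a [b ->]] /vdir_vxvy[]-> /vdir_vxvy[]->; rewrite ?eqxx //.
  by exists a, b.
by exists b, a; rewrite addrC.
Qed.

Definition lin_repr i H s t (r : K) :=
  [/\ vdir s = i, vdir t = i, s != t & exists2 c, c != 0 & H = c *: lin s t r].

Lemma linear_form_lin i H : linear_form i H -> exists s t r, lin_repr i H s t r.
Proof.
move=> iH; have [a [b HE]] := linear_formP iH.
have [a0|a0] := eqVneq a 0.
  exists (vy i), (vx i), 0; split; rewrite ?vdir_vidx 1?eq_sym ?vx_neq_vy //.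
  exists b; last by rewrite HE a0 scale0r add0r /lin scale0r subr0.
  by apply: contraNneq iH.1 => b0; rewrite HE a0 b0 !scale0r addr0.
exists (vx i), (vy i), (- (b / a)); split; rewrite ?vdir_vidx ?vx_neq_vy //.
by exists a => //; rewrite HE /lin scalerBr scalerA mulrN mulrCA mulfV // mulr1 scaleNr opprK.
Qed.

Lemma regular_seq_tdeg_pos (gs : seq R) l d : regular_seq gs -> (l < size gs)%N ->
  trihomog_of d gs`_l -> exists i, (0 < tcomp d i)%N.
Proof.
move=> rg ls gd; have [/existsP[i di]|/existsPn d0] := boolP [exists i, 0 < tcomp d i]%N.
  by exists i.
have gE : gs`_l = (gs`_l@_0)%:MP.
  by apply: (trihomog_const gd) => i; apply/eqP; rewrite -leqn0 leqNgt d0.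
have g0 : gs`_l@_0 != 0.
  by apply: contraNneq (regular_seq_nth_neq0 rg ls) => g0; rewrite gE g0.
case: rg => gs_proper _; exfalso; apply: gs_proper.
by rewrite -mpolyC1 -(mulVf g0) mpolyCM -gE; apply/ideal_genMl/ideal_gen_nth.
Qed.

End Trihomogeneous.

(** * Lines and varieties of lines *)

Section Lines.
Variable K : fieldType.
Local Notation R := {mpoly K[6]}.
Implicit Types (L : line K) (f h : R).

Lemma line_idealF L : line_ideal L (l_F L).
Proof. by apply/ideal_gen2P; exists 1, 0; rewrite mul1r mul0r addr0. Qed.

Lemma line_idealG L : line_ideal L (l_G L).
Proof. by apply/ideal_gen2P; exists 0, 1; rewrite mul1r mul0r add0r. Qed.

Lemma line_ideal_scale L (c1 c2 : K) P1 P2 f : c1 != 0 -> c2 != 0 ->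
  l_F L = c1 *: P1 -> l_G L = c2 *: P2 -> line_ideal L f <-> ideal_gen [:: P1; P2] f.
Proof.
move=> c10 c20 FE GE; rewrite /line_ideal FE GE !ideal_gen2P.
split=> -[a [b ->]].
  by exists (a * c1%:MP), (b * c2%:MP); rewrite -!mulrA !mul_mpolyC.
exists (a * c1^-1%:MP), (b * c2^-1%:MP).
by rewrite -!mulrA !mul_mpolyC !scalerA !mulVf ?scale1r.
Qed.

Lemma prod_line_ideal X (P : pred 'I_(size X)) (h : 'I_(size X) -> R) l :
  (forall l, P l -> line_ideal (nth (dline K) X l) (h l)) -> P l ->
  line_ideal (nth (dline K) X l) (\prod_(l' | P l') h l').
Proof. by move=> Xh Pl; rewrite (bigD1 l) //= mulrC; apply/ideal_genMl/Xh. Qed.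

Lemma line_ideal_eval L f v : line_ideal L f ->
  (l_F L).@[v] = 0 -> (l_G L).@[v] = 0 -> f.@[v] = 0.
Proof.
by move=> /ideal_gen2P[a [b ->]] Fv Gv; rewrite mevalD !mevalM Fv Gv !mulr0 addr0.
Qed.

Lemma locus_line_ideal L L' : (forall f, line_ideal L f <-> line_ideal L' f) ->
  forall v, locus L v <-> locus L' v.
Proof.
have sub A B v : (forall f, line_ideal A f -> line_ideal B f) -> locus B v -> locus A v.
  move=> AB [pv [Fv Gv]]; split=> //.
  by split; apply: line_ideal_eval Fv Gv; apply: AB; [apply: line_idealF | apply: line_idealG].
by move=> LL' v; split; apply: sub => f /LL'.
Qed.

End Lines.

Section LineSubstitution.
Variables (K : fieldType) (L0 : line K) (s1 t1 s2 t2 : 'I_6) (r1 r2 : K).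
Hypotheses (L0line : is_line L0).
Hypotheses (F0E : lin_repr (l_i L0) (l_F L0) s1 t1 r1).
Hypotheses (G0E : lin_repr (l_j L0) (l_G L0) s2 t2 r2).
Local Notation lin1 := (lin s1 t1 r1).
Local Notation lin2 := (lin s2 t2 r2).
Local Notation psi p := (msubst s2 t2 r2 (msubst s1 t1 r1 p)).

Let dir12 u v : vdir u = l_i L0 -> vdir v = l_j L0 -> u != v.
Proof. by move=> ui vj; apply: vdir_neq; rewrite ui vj; case: L0line. Qed.
Let s1i : vdir s1 = l_i L0. Proof. by case: F0E. Qed.
Let s1t1 : s1 != t1. Proof. by case: F0E. Qed.
Let s2j : vdir s2 = l_j L0. Proof. by case: G0E. Qed.
Let s2t2 : s2 != t2. Proof. by case: G0E. Qed.
Let s1s2 : s1 != s2. Proof. by case: F0E G0E => + _ _ _ [+ _ _ _]; apply: dir12. Qed.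
Let s1t2 : s1 != t2. Proof. by case: F0E G0E => + _ _ _ [_ + _ _]; apply: dir12. Qed.
Let s2t1 : s2 != t1.
Proof. by case: F0E G0E => _ + _ _ [+ _ _ _]; rewrite eq_sym; apply: dir12. Qed.

Lemma line_ideal_lin f : line_ideal L0 f <-> ideal_gen [:: lin1; lin2] f.
Proof.
case: F0E G0E => _ _ _ [c1 c10 FE] [_ _ _ [c2 c20 GE]].
exact: line_ideal_scale c10 c20 FE GE.
Qed.

Lemma msubst2_line_sep x y : lin1 * x = lin2 * y -> psi x = 0 /\ psi y = 0.
Proof. exact: msubst2_lin_sep. Qed.

Lemma msubst2_line_ideal f : line_ideal L0 f -> psi f = 0.
Proof.
move/line_ideal_lin/ideal_gen2P => [a [b ->]].
by rewrite !rmorphD !rmorphM /= msubst2_lin1 // msubst2_lin2 // !mulr0 addr0.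
Qed.

Lemma line_ideal_proper : ~ line_ideal L0 1.
Proof. by move/msubst2_line_ideal/eqP; rewrite !rmorph1 oner_eq0. Qed.

Lemma msubst2_linear_form k H : linear_form k H -> psi H = 0 ->
  (k = l_i L0 /\ exists2 c, c != 0 & H = c *: lin1) \/
  (k = l_j L0 /\ exists2 c, c != 0 & H = c *: lin2).
Proof.
move=> kH psiH.
have lin_of s t r a b : H = a *: 'X_s + b *: 'X_t -> (a * r + b) *: 'X_t = 0 ->
    exists2 c, c != 0 & H = c *: lin s t r.
  move=> HE /(binom_lin s) abE; exists a; last by rewrite HE abE.
  by apply: contraNneq kH.1 => a0; rewrite HE abE a0 scale0r.
have fixk s t r : vdir s != k -> msubst s t r H = H.
  by move=> sk; apply: msubst_trihomog kH.2 _; rewrite tcomp_evec eq_sym (negbTE sk).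
have [ki|ki] := eqVneq k (l_i L0).
  have [s1k t1k] : vdir s1 = k /\ vdir t1 = k by rewrite ki; case: F0E.
  have [a [b HE]] := linear_form_dir kH s1k t1k s1t1.
  left; split=> //; apply: (lin_of _ _ _ _ _ HE).
  by rewrite -psiH HE msubst_binom // comp_mpolyZ msubstX [t1 == _]eq_sym (negbTE s2t1).
have s1k : vdir s1 != k by rewrite s1i eq_sym.
have [kj|kj] := eqVneq k (l_j L0).
  have [s2k t2k] : vdir s2 = k /\ vdir t2 = k by rewrite kj; case: G0E.
  have [a [b HE]] := linear_form_dir kH s2k t2k s2t2.
  right; split=> //; apply: (lin_of _ _ _ _ _ HE).
  by rewrite -psiH fixk // HE msubst_binom.
have s2k : vdir s2 != k by rewrite s2j eq_sym.
by move: kH.1; rewrite -psiH !fixk // eqxx.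
Qed.

Lemma msubst2_line_locus L : is_line L -> psi (l_F L) = 0 -> psi (l_G L) = 0 ->
  forall v, locus L v <-> locus L0 v.
Proof.
move=> [ijL [FL GL]] psiF psiG; apply: locus_line_ideal => f; rewrite line_ideal_lin.
have [] := msubst2_linear_form FL psiF => -[iE [c1 c10 FE]];
  have [] := msubst2_linear_form GL psiG => -[jE [c2 c20 GE]];
  try by move: ijL; rewrite iE jE eqxx.
  exact: line_ideal_scale c10 c20 FE GE.
by rewrite ideal_gen2C; exact: line_ideal_scale c10 c20 FE GE.
Qed.

End LineSubstitution.

Section Variety.
Variables (K : fieldType) (X : seq (line K)).
Hypothesis HX : variety_of_lines X.
Local Notation R := {mpoly K[6]}.
Local Notation line_of l := (nth (dline K) X l).

Lemma variety_multiplier (S : idomainType) (psi : {rmorphism R -> S})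
    (P : pred 'I_(size X)) :
  (forall l, P l -> psi (l_F (line_of l)) != 0 \/ psi (l_G (line_of l)) != 0) ->
  exists2 M, psi M != 0 & forall l, P l -> line_ideal (line_of l) M.
Proof.
move=> psiX.
pose h l := if psi (l_F (line_of l)) != 0 then l_F (line_of l) else l_G (line_of l).
exists (\prod_(l | P l) h l).
  rewrite rmorph_prod; apply/prodf_neq0 => l /psiX; rewrite /h.
  by case: eqP => [_ []|/eqP].
move=> l; apply: prod_line_ideal => l' _; rewrite /h.
by case: ifP => _; [exact: line_idealF | exact: line_idealG].
Qed.

Let X0 : (0 < size X)%N. Proof. by case: HX; case: (X). Qed.
Let o0 : 'I_(size X) := Ordinal X0.

Lemma variety_ideal_proper : ~ ideal_X X 1.
Proof.
have [_ [FL GL]] := HX.2.1 o0.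
have [s1 [t1 [r1 F0E]]] := linear_form_lin FL.
have [s2 [t2 [r2 G0E]]] := linear_form_lin GL.
by move/(_ o0); apply: line_ideal_proper (HX.2.1 o0) F0E G0E.
Qed.

Lemma variety_ci_size_le2 gs : regular_seq gs ->
  (forall f, ideal_X X f <-> ideal_gen gs f) -> (size gs <= 2)%N.
Proof.
move=> rg gsE; have L0line := HX.2.1 o0; have [_ [FL GL]] := L0line.
have [s1 [t1 [r1 F0E]]] := linear_form_lin FL.
have [s2 [t2 [r2 G0E]]] := linear_form_lin GL.
pose psi : {rmorphism R -> R} := msubst s2 t2 r2 \o msubst s1 t1 r1.
have psiE p : psi p = msubst s2 t2 r2 (msubst s1 t1 r1 p) by [].
have [|M psiM XM] := @variety_multiplier _ psi (fun l => l != o0).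
  move=> l lo; case: (eqVneq (psi (l_F (line_of l))) 0) => [psiF|]; last by left.
  case: (eqVneq (psi (l_G (line_of l))) 0) => [psiG|]; last by right.
  have [v []] := HX.2.2 l o0 lo.
  rewrite !psiE in psiF psiG.
  exact: (msubst2_line_locus L0line F0E G0E (HX.2.1 l) psiF psiG v).
have lin_ideal P : line_ideal (line_of o0) P -> ideal_gen gs (M * P).
  move=> L0P; apply/gsE => l; have [->|lo] := eqVneq l o0; first exact: ideal_genMl.
  by rewrite mulrC; apply/ideal_genMl/XM.
apply: (regular_seq_size_le2 (F := lin s1 t1 r1) (G := lin s2 t2 r2) rg _ _ psiM).
- by move=> l ls; apply/(line_ideal_lin F0E G0E)/(gsE _).2; exact: ideal_gen_nth.
- by move=> x y /(msubst2_line_sep L0line F0E G0E); rewrite !psiE.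
- by apply/lin_ideal/(line_ideal_lin F0E G0E); exact: (@ideal_gen_nth _ _ 0).
- by apply/lin_ideal/(line_ideal_lin F0E G0E); exact: (@ideal_gen_nth _ _ 1).
Qed.

Lemma variety_ci_dir gs i : (forall f, ideal_X X f <-> ideal_gen gs f) ->
  exists2 l, (l < size gs)%N & kill_dir i gs`_l != 0.
Proof.
move=> gsE.
have [|M killM XM] := @variety_multiplier _ (kill_dir i : {rmorphism R -> R}) predT.
  move=> l _; have [ij [[F0 FL] [G0 GL]]] := HX.2.1 l.
  have [li|li] := eqVneq (l_i (line_of l)) i.
    by right; rewrite /= (kill_dir_fix GL) // tcomp_evec -li eq_sym (negbTE ij).
  by left; rewrite /= (kill_dir_fix FL) // tcomp_evec (negbTE li).
have [/existsP[l gl]|/existsPn gs0] := boolP [exists l : 'I_(size gs), kill_dir i gs`_l != 0].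
  by exists l.
case/eqP: killM; apply: rmorph_ideal_gen_eq0 => [l ls|]; last by apply/gsE => l; apply: (XM l).
by apply/eqP; have := gs0 (Ordinal ls); rewrite negbK.
Qed.

End Variety.

Lemma variety_ci_tdeg (K : fieldType) (X : seq (line K)) : variety_of_lines X ->
  complete_intersection (ideal_X X) ->
  exists (F1 F2 : {mpoly K[6]}) (i j k : 'I_3) (a b c : nat),
    [/\ j != i, k != i, F1 != 0, F2 != 0 &
      [/\ trihomog_of (tscale a (evec i)) F1,
          trihomog_of (tadd (tscale b (evec j)) (tscale c (evec k))) F2 &
          forall f, ideal_X X f <-> ideal_gen [:: F1; F2] f]].
Proof.
move=> HX [gs [gs_th [rg gsE]]].
have gs_dir i :
    exists2 l, (l < size gs)%N & forall d, trihomog_of d gs`_l -> tcomp d i = 0%N.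
  have [l ls gl] := variety_ci_dir HX i gsE; exists l => // d gd.
  by apply/eqP; rewrite -leqn0 leqNgt; apply: contra gl => /(kill_dir_pos gd) ->.
have gs_deg l : (l < size gs)%N ->
    exists d, trihomog_of d gs`_l /\ exists i, (0 < tcomp d i)%N.
  move=> ls; have [d gd] := gs_th _ (mem_nth 0 ls).
  by exists d; split=> //; apply: regular_seq_tdeg_pos rg ls gd.
have gs_nz l : (l < size gs)%N -> gs`_l != 0 := regular_seq_nth_neq0 rg.
have gs2 := variety_ci_size_le2 HX rg gsE.
move: gs2 gs_dir gs_deg gs_nz gsE.
case: gs {gs_th rg} => [|g0 [|g1 [|//]]] _ gs_dir gs_deg gs_nz gsE.
- by have [] := gs_dir 0.
- have [d0 [g0d [i d0i]]] := gs_deg 0%N isT.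
  by have [[|//] _ /(_ d0 g0d) d0i0] := gs_dir i; rewrite d0i0 in d0i.
have [d0 [g0d d0pos]] := gs_deg 0%N isT; have [d1 [g1d d1pos]] := gs_deg 1%N isT.
have d01 i : tcomp d0 i = 0%N \/ tcomp d1 i = 0%N.
  by have [[|[|//]] _ gi] := gs_dir i; [left; apply: gi g0d | right; apply: gi g1d].
have [i d0d1] := tdeg_complementary d01 d0pos d1pos.
have [j [k [ji ki jk cover]]] := ord3_others i.
case: d0d1 => [[d0i d1i]|[d1i d0i]].
  exists g0, g1, i, j, k, (tcomp d0 i), (tcomp d1 j), (tcomp d1 k).
  split; rewrite ?(gs_nz 0%N) ?(gs_nz 1%N) //.
  by split; rewrite // -?(tdeg_single d0i) -?(tdeg_pair ji ki jk cover d1i).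
exists g1, g0, i, j, k, (tcomp d1 i), (tcomp d0 j), (tcomp d0 k).
split; rewrite ?(gs_nz 0%N) ?(gs_nz 1%N) //.
split; rewrite // -?(tdeg_single d1i) -?(tdeg_pair ji ki jk cover d0i) //.
by move=> f; rewrite gsE ideal_gen2C.
Qed.

Lemma tdeg_regular_seq (K : closedFieldType) (F1 F2 : {mpoly K[6]}) i j k a b c :
  j != i -> k != i -> F1 != 0 -> F2 != 0 ->
  trihomog_of (tscale a (evec i)) F1 ->
  trihomog_of (tadd (tscale b (evec j)) (tscale c (evec k))) F2 ->
  ~ ideal_gen [:: F1; F2] 1 -> regular_seq [:: F1; F2].
Proof.
move=> ji ki F10 F20 F1d F2d F12; split=> // -[[|[|//]] l2] h /=.
  move=> /ideal_gen_nilP/eqP; rewrite mulf_eq0 (negbTE F10) => /eqP ->.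
  exact: ideal_gen0.
move=> /ideal_gen1P[q F2hE]; apply/ideal_gen1P.
have [p sp F1E] := trihomog_bform F1d.
have p0 : p != 0.
  by apply: contraNneq F10 => p0; rewrite F1E p0 /bform big1 // => t _; rewrite coef0 scale0r.
have F2i m : m \in msupp F2 -> m (vx i) = 0%N /\ m (vy i) = 0%N.
  move=> F2m; split; apply: (trihomog_mnm F2d F2m);
  by rewrite vdir_vidx tcomp_tadd !tcomp_tscale !tcomp_evec (negbTE ji) (negbTE ki) !muln0.
rewrite F1E in F2hE *.
exact: (regular_mod_bform (vx_neq_vy i) p0 sp F20 F2i F2hE).
Qed.

Unset Implicit Arguments. Set Strict Implicit.

Theorem theorem5p10 (K : closedFieldType) (charK0 : [pchar K] =i pred0)
  (X : seq (line K)) (HX : variety_of_lines X) :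
  complete_intersection (ideal_X X) <->
  exists (F1 F2 : {mpoly K[6]}) (i j k : 'I_3) (a b c : nat),
    [/\ j != i, k != i, F1 != 0, F2 != 0 &
      [/\ trihomog_of (tscale a (evec i)) F1,
          trihomog_of (tadd (tscale b (evec j)) (tscale c (evec k))) F2 &
          forall f, ideal_X X f <-> ideal_gen [:: F1; F2] f]].
Proof.
split; first exact: variety_ci_tdeg.
move=> [F1 [F2 [i [j [k [a [b [c [ji ki F10 F20 [F1d F2d XE]]]]]]]]]].
exists [:: F1; F2]; split; last split=> //.
  by move=> g; rewrite !inE => /orP[]/eqP->; eexists; eassumption.
apply: tdeg_regular_seq ji ki F10 F20 F1d F2d _.
by move/XE; exact: variety_ideal_proper.
Qed.
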